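(* Let $\mathcal C$ be a binary linear code presented by an $m\times n$ parity-check matrix $H$, let $\mathbf c\in\mathcal C$ be a codeword, let $\boldsymbol\omega$ be a linear programming pseudocodeword, and let $\Psi=\{\boldsymbol\psi_1,\dots,\boldsymbol\psi_r\}$ be a set of linear programming pseudocodewords, with $\Psi^{\mathbf c}=\{\boldsymbol\psi_1^{\mathbf c},\dots,\boldsymbol\psi_r^{\mathbf c}\}$. Let $\phi_{\mathbf c}:\mathbb R^n\to\mathbb R^n$ be defined by $x_i\mapsto(-1)^{c_i}x_i$ for all $i=1,\dots,n$. Then $\phi_{\mathbf c}$ is an isometry from the recovery cone $\mathcal K_{\boldsymbol\omega}$ onto $\mathcal K_{\boldsymbol\omega^{\mathbf c}}$, and an isometry from the approximation cone $\mathcal R_{\boldsymbol\omega,\Psi}$ onto $\mathcal R_{\boldsymbol\omega^{\mathbf c},\Psi^{\mathbf c}}$.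
   Context: For a row $\mathbf h_j$ of $H=(h_{j,i})$ let $N(\mathbf h_j)=\{i : h_{j,i}=1\}$. The fundamental polytope $\mathcal P(H)$ is written as $\{\mathbf x: A\mathbf x\ge\mathbf b\}$ with the following constraints (rows of $A$ with right-hand sides): $x_i\ge 0$ and $-x_i\ge -1$ for each $i=1,\dots,n$; and for every row index $j$ and every odd-sized $S\subseteq N(\mathbf h_j)$, $-\sum_{i\in S}x_i+\sum_{i'\in N(\mathbf h_j)\setminus S}x_{i'}\ge 1-|S|$. A linear programming (LP) pseudocodeword is an extreme point of $\mathcal P(H)$. For $\mathbf c\in\mathcal C$ and $\mathbf x\in\mathcal P(H)$, the relative point $\mathbf x^{\mathbf c}$ has $i$th coordinate $|x_i-c_i|$; if $\boldsymbol\omega$ is an LP pseudocodeword, so is $\boldsymbol\omega^{\mathbf c}$. The recovery cone $\mathcal K_{\boldsymbol\omega}$ is the set of conic (nonnegative) combinations of the rows of $A$ whose constraints are active (hold with equality) at $\boldsymbol\omega$. The approximation cone $\mathcal R_{\boldsymbol\omega,\Psi}$ is $\{\mathbf x\in\mathbb R^n : (\boldsymbol\psi_i-\boldsymbol\omega)^T\mathbf x\ge 0 \text{ for } i=1,\dots,r\}$. *)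

From mathcomp Require Import all_boot all_order all_algebra reals.
Set Implicit Arguments. Unset Strict Implicit. Unset Printing Implicit Defensive.
Import Order.TTheory GRing.Theory Num.Theory.
Local Open Scope ring_scope.

Section Defs.
Variables (R : realType) (m n : nat).

Definition codeword (H : 'M['F_2]_(m, n)) (c : 'rV['F_2]_n) : Prop :=
  H *m c^T = 0.

Definition bitR (c : 'rV['F_2]_n) (i : 'I_n) : R := (nat_of_ord (c 0 i))%:R.

Definition Nrow (H : 'M['F_2]_(m, n)) (j : 'I_m) : {set 'I_n} :=
  [set i | H j i == 1].

(* indices of the rows of A: inl (i,false): x_i >= 0 ; inl (i,true): -x_i >= -1 ;
   inr (j,S): the parity constraint for row j and S (valid when S is an
   odd-sized subset of N(h_j)). *)
Definition cidx := (('I_n * bool) + ('I_m * {set 'I_n}))%type.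

Definition cvalid (H : 'M['F_2]_(m, n)) (k : cidx) : bool :=
  match k with
  | inl _ => true
  | inr (j, T) => (T \subset Nrow H j) && odd #|T|
  end.

Definition Arow (H : 'M['F_2]_(m, n)) (k : cidx) : 'rV[R]_n :=
  match k with
  | inl (i, false) => \row_(i' < n) (if i' == i then 1 else 0)
  | inl (i, true) => \row_(i' < n) (if i' == i then -1 else 0)
  | inr (j, T) => \row_(i' < n)
      (if i' \in T then -1 else if i' \in Nrow H j then 1 else 0)
  end.

Definition brhs (k : cidx) : R :=
  match k with
  | inl (_, false) => 0
  | inl (_, true) => -1
  | inr (_, T) => 1 - (#|T|)%:R
  end.

Definition dotp (a x : 'rV[R]_n) : R := \sum_(i < n) a 0 i * x 0 i.

Definition fpolytope (H : 'M['F_2]_(m, n)) (x : 'rV[R]_n) : Prop :=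
  forall k, cvalid H k -> brhs k <= dotp (Arow H k) x.

Definition extreme_point (P : 'rV[R]_n -> Prop) (x : 'rV[R]_n) : Prop :=
  P x /\ forall y z t, P y -> P z -> 0 < t < 1 ->
    x = t *: y + (1 - t) *: z -> y = z.

Definition LP_pseudocodeword (H : 'M['F_2]_(m, n)) (w : 'rV[R]_n) : Prop :=
  extreme_point (fpolytope H) w.

Definition relpt (c : 'rV['F_2]_n) (x : 'rV[R]_n) : 'rV[R]_n :=
  \row_(i < n) `|x 0 i - bitR c i|.

Definition active (H : 'M['F_2]_(m, n)) (w : 'rV[R]_n) (k : cidx) : bool :=
  cvalid H k && (dotp (Arow H k) w == brhs k).

Definition recovery_cone (H : 'M['F_2]_(m, n)) (w : 'rV[R]_n)
    (x : 'rV[R]_n) : Prop :=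
  exists lam : cidx -> R,
    (forall k, 0 <= lam k) /\ (forall k, lam k != 0 -> active H w k) /\
    x = \sum_(k : cidx) lam k *: Arow H k.

Definition approx_cone (r : nat) (w : 'rV[R]_n) (Psi : 'I_r -> 'rV[R]_n)
    (x : 'rV[R]_n) : Prop :=
  forall l : 'I_r, 0 <= dotp (Psi l - w) x.

Definition phi (c : 'rV['F_2]_n) (x : 'rV[R]_n) : 'rV[R]_n :=
  \row_(i < n) ((-1) ^+ nat_of_ord (c 0 i) * x 0 i).

Definition edist (x y : 'rV[R]_n) : R :=
  Num.sqrt (\sum_(i < n) (x 0 i - y 0 i) ^+ 2).

Definition isometry_onto (f : 'rV[R]_n -> 'rV[R]_n)
    (A B : 'rV[R]_n -> Prop) : Prop :=
  [/\ forall x y, A x -> A y -> edist (f x) (f y) = edist x y,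
      forall x, A x -> B (f x)
    & forall y, B y -> exists x, A x /\ f x = y].

End Defs.

(* phi_c is a coordinatewise sign change, hence a linear involutive isometry preserving the
   inner product.  On the box [0,1]^n the relative point is x^c = phi_c (x - c), so phi_c maps
   differences of relative points to differences of points: this handles the approximation
   cone.  For the recovery cone, phi_c permutes the rows of A up to the right-hand sides: a box
   row for coordinate i changes sign when c_i = 1, and the parity row (j, S) becomes the parity
   row (j, S Δ C_j) with C_j = N(h_j) ∩ supp c, which stays odd because c is a codeword.  The
   offset of the right-hand sides is exactly <a_k, c>, so a row active at w maps to a row active
   at w^c.  Surjectivity onto either cone is the same argument run from w^c, as (w^c)^c = w. *)
From HB Require Import structures.
From mathcomp Require Import all_boot all_order all_algebra reals.
From mathcomp Require Import ring.
Import Order.TTheory GRing.Theory Num.Theory.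
Set Implicit Arguments. Unset Strict Implicit.
Local Open Scope ring_scope.

Lemma val_F2 (x : 'F_2) : (x : nat) = 0%N \/ (x : nat) = 1%N.
Proof. by case: x => [[|[|k]] // ?]; [left | right]. Qed.

Lemma F2P (x : 'F_2) : x = 0 \/ x = 1.
Proof. by case: x => [[|[|k]] // ?]; [left | right]; apply/val_inj. Qed.

Lemma natr_card (K : pzSemiRingType) (T : finType) (A : {set T}) :
  #|A|%:R = \sum_i (i \in A)%:R :> K.
Proof.
rewrite -sum1_card natr_sum big_mkcond; apply: eq_bigr => i _.
by case: (i \in A).
Qed.

Lemma isometry_onto_involutive (R : realType) (n : nat) (f : 'rV[R]_n -> 'rV[R]_n)
    (A B : 'rV[R]_n -> Prop) :
  involutive f -> (forall x y, edist (f x) (f y) = edist x y) ->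
  (forall x, A x -> B (f x)) -> (forall y, B y -> A (f y)) ->
  isometry_onto f A B.
Proof.
move=> fK f_iso AB BA; split=> [x y _ _ | // | y /BA Afy].
  exact: f_iso.
by exists (f y); rewrite fK.
Qed.

Section SignChange.
Variables (R : realType) (n : nat) (c : 'rV['F_2]_n).

Lemma dotpBr (a x y : 'rV[R]_n) : dotp a (x - y) = dotp a x - dotp a y.
Proof. by rewrite /dotp -sumrB; apply: eq_bigr => i _; rewrite !mxE mulrBr. Qed.

Lemma dotp_delta i a (x : 'rV[R]_n) :
  dotp (\row_i' (if i' == i then a else 0)) x = a * x 0 i.
Proof.
rewrite /dotp (bigD1 i) //= mxE eqxx big1 ?addr0 // => j ji.
by rewrite mxE (negbTE ji) mul0r.
Qed.

Lemma phi_is_linear : linear (@phi R n c).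
Proof. by move=> a x y; apply/rowP => i; rewrite !mxE mulrDr mulrCA. Qed.

HB.instance Definition _ :=
  GRing.isLinear.Build R 'rV[R]_n 'rV[R]_n *:%R (@phi R n c) phi_is_linear.

Lemma phiK : involutive (@phi R n c).
Proof. by move=> x; apply/rowP => i; rewrite !mxE signrMK. Qed.

Lemma dotp_phi (a x : 'rV[R]_n) : dotp (phi c a) (phi c x) = dotp a x.
Proof. by apply: eq_bigr => i _; rewrite !mxE mulrACA -expr2 sqrr_sign mul1r. Qed.

Lemma edist_phi (x y : 'rV[R]_n) : edist (phi c x) (phi c y) = edist x y.
Proof.
rewrite /edist; congr Num.sqrt; apply: eq_bigr => i _.
by rewrite !mxE -mulrBr exprMn sqrr_sign mul1r.
Qed.

Definition bitvec : 'rV[R]_n := \row_i bitR R c i.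

Lemma phi_bitvec : phi c bitvec = - bitvec.
Proof.
apply/rowP => i; rewrite !mxE /bitR.
by case: (val_F2 (c 0 i)) => ->; rewrite ?mulr0 ?oppr0 // expr1 mulN1r.
Qed.

Definition box (x : 'rV[R]_n) : Prop := forall i, 0 <= x 0 i <= 1.

Lemma relptE x : box x -> relpt c x = phi c (x - bitvec).
Proof.
move=> bx; apply/rowP => i; have /andP [x0 x1] := bx i.
rewrite !mxE /bitR; case: (val_F2 (c 0 i)) => -> /=.
  by rewrite subr0 mul1r ger0_norm.
by rewrite ler0_norm ?subr_le0 // mulN1r.
Qed.

Lemma box_relpt x : box x -> box (relpt c x).
Proof.
move=> bx i; have /andP [x0 x1] := bx i.
rewrite relptE // !mxE /bitR; case: (val_F2 (c 0 i)) => -> /=.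
  by rewrite subr0 mul1r x0 x1.
by rewrite mulN1r opprB subr_ge0 x1 lerBlDr lerDl x0.
Qed.

Lemma relptK x : box x -> relpt c (relpt c x) = x.
Proof.
move=> bx; rewrite (relptE (box_relpt bx)) (relptE bx).
by rewrite linearB /= phiK phi_bitvec opprK subrK.
Qed.

Lemma relptB x y : box x -> box y -> relpt c x - relpt c y = phi c (x - y).
Proof. by move=> bx by'; rewrite !relptE // -linearB /= opprB addrA subrK. Qed.

Lemma approx_cone_phi r w (Psi : 'I_r -> 'rV[R]_n) x :
  box w -> (forall l, box (Psi l)) -> approx_cone w Psi x ->
  approx_cone (relpt c w) (fun l => relpt c (Psi l)) (phi c x).
Proof. by move=> bw bPsi Ax l; rewrite relptB // dotp_phi. Qed.

End SignChange.

Section Constraints.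
Variables (R : realType) (m n : nat) (H : 'M['F_2]_(m, n)) (c : 'rV['F_2]_n).

Lemma fpolytope_box (x : 'rV[R]_n) : fpolytope H x -> box x.
Proof.
move=> Px i; have := Px (inl (i, false)) erefl; have := Px (inl (i, true)) erefl.
rewrite /brhs /Arow !dotp_delta mul1r mulN1r lerN2.
by move=> -> ->.
Qed.

Definition ones_in (j : 'I_m) : {set 'I_n} :=
  [set i in Nrow H j | (c 0 i : nat) == 1%N].

Definition symdiff (T C : {set 'I_n}) : {set 'I_n} := [set i | (i \in T) (+) (i \in C)].

Lemma odd_symdiff T C : odd #|symdiff T C| = odd #|T| (+) odd #|C|.
Proof.
have -> : symdiff T C = (T :\: C) :|: (C :\: T).
  by apply/setP => i; rewrite !inE; case: (i \in T); case: (i \in C).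
rewrite cardsU; have -> : (T :\: C) :&: (C :\: T) = set0.
  by apply/setP => i; rewrite !inE; case: (i \in T); case: (i \in C).
rewrite cards0 subn0 -(cardsID C T) -(cardsID T C) setIC !oddD.
by rewrite addbACA addbb.
Qed.

Lemma codeword_ones_even j : codeword H c -> ~~ odd #|ones_in j|.
Proof.
move=> /matrixP/(_ j 0); rewrite !mxE; under eq_bigr => i _ do rewrite mxE.
have -> : \sum_i H j i * c 0 i = (#|ones_in j|%:R : 'F_2).
  rewrite natr_card; apply: eq_bigr => i _.
  by rewrite !inE; case: (F2P (H j i)) => ->; case: (F2P (c 0 i)) => ->; apply/val_inj.
move/(congr1 val) => /=; rewrite (@val_Fp_nat 2) // modn2.
by case: (odd #|ones_in j|).
Qed.

Definition flip_cidx (k : cidx m n) : cidx m n :=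
  match k with
  | inl (i, b) => inl (i, b (+) ((c 0 i : nat) == 1%N))
  | inr (j, T) => inr (j, symdiff T (ones_in j))
  end.

Lemma flip_cidxK : involutive flip_cidx.
Proof.
case=> [[i b] | [j T]] /=; first by rewrite addbK.
by congr (inr (j, _)); apply/setP => i; rewrite !inE addbK.
Qed.

Lemma cvalid_flip k : codeword H c -> cvalid H k -> cvalid H (flip_cidx k).
Proof.
case: k => [[i b] // | [j T] Hc /andP [TN oddT]] /=.
rewrite odd_symdiff oddT (negbTE (codeword_ones_even j Hc)) andbT.
apply/subsetP => i; rewrite !inE.
case: (boolP (i \in T)) => [/(subsetP TN) | _ /andP [] //].
by rewrite inE => ->.
Qed.

Lemma phi_Arow k : cvalid H k -> phi c (Arow R H k) = Arow R H (flip_cidx k).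
Proof.
case: k => [[i b] _ | [j T] vk].
  case: (val_F2 (c 0 i)) => ci; case: b; rewrite /= ci /=; apply/rowP => i'; rewrite !mxE;
  have [-> | ne] := eqVneq i' i;
  by rewrite ?ci ?(negbTE ne) ?mulr0 ?expr0 ?mul1r ?expr1 ?mulN1r ?opprK.
apply/rowP => i'; rewrite !mxE !inE; have := subsetP (andP vk).1 i'; rewrite inE.
case: (val_F2 (c 0 i')) => ->; rewrite /= ?expr1 ?mul1r ?addbF ?andbT ?mulN1r;
  by case: (i' \in T) => [-> | _] //; case: (H j i' == 1); rewrite ?opprK ?oppr0.
Qed.

Lemma brhs_flip k : cvalid H k ->
  brhs R (flip_cidx k) = brhs R k - dotp (Arow R H k) (bitvec R c).
Proof.
case: k => [[i b] _ | [j T] vk].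
  case: (val_F2 (c 0 i)) => ci; case: b;
  by rewrite /= ci /= dotp_delta mxE /bitR ci; ring.
rewrite /= !natr_card /dotp -addrA -opprD -big_split.
congr (_ - _); apply: eq_bigr => i' _; rewrite !mxE !inE /bitR.
have := subsetP (andP vk).1 i'; rewrite inE.
case: (val_F2 (c 0 i')) => -> /=; rewrite ?addbF ?andbT;
  by case: (i' \in T) => [-> | _] //=; case: (H j i' == 1) => /=; ring.
Qed.

Lemma active_flip (w : 'rV[R]_n) k : codeword H c -> box w -> active H w k ->
  active H (relpt c w) (flip_cidx k).
Proof.
move=> Hc bw /andP [vk /eqP act]; rewrite /active cvalid_flip //=.
by rewrite -phi_Arow // relptE // dotp_phi dotpBr act brhs_flip.
Qed.

Lemma recovery_cone_phi (w x : 'rV[R]_n) : codeword H c -> box w ->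
  recovery_cone H w x -> recovery_cone H (relpt c w) (phi c x).
Proof.
move=> Hc bw [lam [lam_ge0 [lam_act ->]]].
exists (lam \o flip_cidx); split=> [k | ]; first exact: lam_ge0.
split=> [k /lam_act | ].
  by rewrite -{2}(flip_cidxK k); apply: active_flip.
rewrite linear_sum [RHS](reindex_inj (inv_inj flip_cidxK)) /=.
apply: eq_bigr => k _; rewrite flip_cidxK linearZ /=.
have [-> | /lam_act /andP [vk _]] := eqVneq (lam k) 0; first by rewrite !scale0r.
by rewrite phi_Arow.
Qed.

End Constraints.

Theorem proposition5 (R : realType) (m n r : nat) (H : 'M['F_2]_(m, n))
    (c : 'rV['F_2]_n) (w : 'rV[R]_n) (Psi : 'I_r -> 'rV[R]_n) :
  codeword H c ->
  LP_pseudocodeword H w ->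
  (forall l, LP_pseudocodeword H (Psi l)) ->
  isometry_onto (phi c) (recovery_cone H w) (recovery_cone H (relpt c w)) /\
  isometry_onto (phi c) (approx_cone w Psi)
    (approx_cone (relpt c w) (fun l => relpt c (Psi l))).
Proof.
move=> Hc [/fpolytope_box bw _] PsiP.
have bPsi l : box (Psi l) by case: (PsiP l) => /fpolytope_box.
have bwc := box_relpt c bw.
split; apply: isometry_onto_involutive (phiK c) (edist_phi c) _ _ => y.
- exact: recovery_cone_phi.
- by move/(recovery_cone_phi Hc bwc); rewrite relptK.
- exact: approx_cone_phi.
- move=> /(approx_cone_phi c bwc (fun l => box_relpt c (bPsi l))) Ay l.
  by have := Ay l; rewrite !relptK.
Qed.
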